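(* For all integers $n\geq1$ and all $i,j\in\mathbb N$ the following polynomial identities hold: \begin{align*} U_{n+i}U_{n+j}-U_{n-1}U_{n+1+i+j}&=U_iU_j,\\ T_{n+i}T_{n+j}-T_{n-1}T_{n+1+i+j}&=(1-x^2)U_iU_j,\\ T_{n+i}U_{n+j}-U_{n-1}T_{n+1+i+j}&=T_iU_j,\\ T_{n+i}U_{n+j}-T_{n-1}U_{n+1+i+j}&=-U_iT_{j+2},\\ T_{n+i}T_{n+j}-(x^2-1)U_{n-1}U_{n-1+i+j}&=T_iT_j. \end{align*}
   Context: $T_n=T_n(x)$ and $U_n=U_n(x)$ denote the Chebyshev polynomials of the first and second kind, defined by $T_0=1$, $T_1=x$, $T_{n+1}=2xT_n-T_{n-1}$ and $U_0=1$, $U_1=2x$, $U_{n+1}=2xU_n-U_{n-1}$ for $n\geq1$. *)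

From mathcomp Require Import all_boot all_algebra.
Set Implicit Arguments. Unset Strict Implicit. Unset Printing Implicit Defensive.
Import GRing.Theory.
Local Open Scope ring_scope.

(* Chebyshev polynomials in {poly R}, R any commutative ring.
   cheb_pair a b n = (P_n, P_{n+1}) for the recurrence P_{n+2} = 2X P_{n+1} - P_n
   with P_0 = a, P_1 = b. *)
Fixpoint cheb_pair (R : comRingType) (a b : {poly R}) (n : nat) : {poly R} * {poly R} :=
  match n with
  | O => (a, b)
  | S m => let p := cheb_pair a b m in (p.2, 2%:R *: 'X * p.2 - p.1)
  end.

Definition chebT (R : comRingType) (n : nat) : {poly R} := (cheb_pair 1 'X n).1.
Definition chebU (R : comRingType) (n : nat) : {poly R} := (cheb_pair 1 (2%:R *: 'X) n).1.

(* For solutions a, b of x_(k+2) = c x_(k+1) - x_k, the quantity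
   a_(r+k) b_(r+l) - a_r b_(r+k+l) does not depend on r: its increment in r
   solves the recurrence in k and vanishes at k = 0, 1.  This reduces the
   identities to n = 1 (the last one after writing T through U), where both
   sides solve the recurrence in i and in j separately, so they agree as soon
   as they agree for i, j in {0, 1}. *)

From mathcomp Require Import all_boot all_algebra.
From mathcomp Require Import ring zify.
Set Implicit Arguments.
Unset Strict Implicit.
Unset Printing Implicit Defensive.
Import GRing.Theory.
Local Open Scope ring_scope.

Section Recurrence.
Variables (R : comPzRingType) (c : R).

Definition cheb_rec (f : nat -> R) := forall k, f k.+2 = c * f k.+1 - f k.

Lemma cheb_rec_eq (f g : nat -> R) : cheb_rec f -> cheb_rec g ->
  f 0 = g 0 -> f 1 = g 1 -> forall k, f k = g k.
Proof.
move=> hf hg e0 e1 k; suff [] : f k = g k /\ f k.+1 = g k.+1 by [].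
elim: k => [|k [ek ek1]]; first by [].
by split; rewrite // hf hg ek ek1.
Qed.

Lemma cheb_rec2_eq (F G : nat -> nat -> R) :
  (forall j, cheb_rec (F^~ j)) -> (forall i, cheb_rec (F i)) ->
  (forall j, cheb_rec (G^~ j)) -> (forall i, cheb_rec (G i)) ->
  F 0 0 = G 0 0 -> F 0 1 = G 0 1 -> F 1 0 = G 1 0 -> F 1 1 = G 1 1 ->
  forall i j, F i j = G i j.
Proof.
move=> hFi hFj hGi hGj e00 e01 e10 e11 i j; move: i.
apply: (cheb_rec_eq (hFi j) (hGi j)).
- exact: (cheb_rec_eq (hFj 0) (hGj 0)).
- exact: (cheb_rec_eq (hFj 1) (hGj 1)).
Qed.

Variables (a b : nat -> R).
Hypotheses (ha : cheb_rec a) (hb : cheb_rec b).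

Lemma cheb_rec_shift r k l :
  a (r + k) * b (r + l) - a r * b (r + k + l) = a k * b l - a 0 * b (k + l).
Proof.
elim: r => [|r IHr]; first by rewrite !add0n.
rewrite -{}IHr; move: k; apply: cheb_rec_eq => [k|k||] /=;
  rewrite ?addn0 ?addn1 !(addSn, addnS) ?ha ?hb; ring.
Qed.

Lemma cheb_rec_shift_pred n i j : (0 < n)%N ->
  a (n + i) * b (n + j) - a n.-1 * b (n + 1 + i + j) =
  a i.+1 * b j.+1 - a 0 * b (i + j).+2.
Proof.
case: n => // r _.
rewrite [(i + j).+2](_ : _ = i.+1 + j.+1)%N; last by rewrite addSn addnS.
rewrite -(cheb_rec_shift r) /= !addSnnS; congr (_ - _ * b _); lia.
Qed.

End Recurrence.

Section Chebyshev.
Context {R : comNzRingType}.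
Local Notation T := (@chebT R).
Local Notation U := (@chebU R).

Lemma chebT_rec : cheb_rec (2%:R * 'X) T.
Proof. by move=> k; rewrite /chebT /= -mul_polyC polyC_natr. Qed.

Lemma chebU_rec : cheb_rec (2%:R * 'X) U.
Proof. by move=> k; rewrite /chebU /= -mul_polyC polyC_natr. Qed.

Lemma chebT0 : T 0 = 1. Proof. by []. Qed.
Lemma chebT1 : T 1 = 'X. Proof. by []. Qed.
Lemma chebU0 : U 0 = 1. Proof. by []. Qed.
Lemma chebU1 : U 1 = 2%:R * 'X.
Proof. by rewrite /chebU /= -mul_polyC polyC_natr. Qed.

Let chebE := (chebT_rec, chebU_rec, chebT0, chebT1, chebU0, chebU1).

Lemma chebT_succ k : T k.+1 = U k.+1 - 'X * U k.
Proof.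
move: k; apply: (cheb_rec_eq (c := 2%:R * 'X)) => [k|k||] /=;
  rewrite ?chebE; ring.
Qed.

Lemma chebT_succ2 k : T k.+2 = 'X * T k.+1 + ('X ^+ 2 - 1) * U k.
Proof.
move: k; apply: (cheb_rec_eq (c := 2%:R * 'X)) => [k|k||] /=;
  rewrite ?chebE; ring.
Qed.

Local Ltac by_cheb_rec2 :=
  apply: (cheb_rec2_eq (c := 2%:R * 'X)) => [j k|i k|j k|i k||||] /=;
  rewrite ?(addSn, addnS) ?chebE; ring.

Lemma chebUU_succ i j : U i.+1 * U j.+1 - U (i + j).+2 = U i * U j.
Proof.
move: i j; by_cheb_rec2.
Qed.

Lemma chebTT_succ i j :
  T i.+1 * T j.+1 - T (i + j).+2 = (1 - 'X ^+ 2) * U i * U j.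
Proof.
move: i j; by_cheb_rec2.
Qed.

Lemma chebUT_succ i j : U i.+1 * T j.+1 - T (i + j).+2 = U i * T j.
Proof.
move: i j; by_cheb_rec2.
Qed.

Lemma chebTU_succ i j : T i.+1 * U j.+1 - U (i + j).+2 = - (U i * T j.+2).
Proof.
move: i j; by_cheb_rec2.
Qed.

Lemma chebTT_pell_succ i j :
  T i.+1 * T j.+1 - ('X ^+ 2 - 1) * U (i + j) = T i * T j.
Proof.
move: i j; by_cheb_rec2.
Qed.

Lemma chebTT_pell_shift r i j :
  T (r.+1 + i) * T (r.+1 + j) - ('X ^+ 2 - 1) * U r * U (r + i + j) =
  T i.+1 * T j.+1 - ('X ^+ 2 - 1) * U (i + j).
Proof.
have mulTU l k : T (r + l) * U (r + k) = U r * T (r + k + l) + (U k * T l - T (k + l)).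
  by have := cheb_rec_shift chebU_rec chebT_rec r k l; rewrite chebU0 mul1r => <-; ring.
rewrite [(r.+1 + j)%N]addSn chebT_succ -addSn !addSnnS mulrBr mulrCA !mulTU.
rewrite [T j.+1]chebT_succ !(addnS, addSn) !chebT_succ2 [(r + j + i)%N]addnAC [(j + i)%N]addnC.
ring.
Qed.

End Chebyshev.

Theorem theorem2p1 (R : comRingType) (n i j : nat) (hn : (1 <= n)%N) :
  let T := @chebT R in let U := @chebU R in
  [/\ U (n + i)%N * U (n + j)%N - U n.-1 * U (n + 1 + i + j)%N = U i * U j,
      T (n + i)%N * T (n + j)%N - T n.-1 * T (n + 1 + i + j)%N = (1 - 'X ^+ 2) * U i * U j,
      T (n + i)%N * U (n + j)%N - U n.-1 * T (n + 1 + i + j)%N = T i * U j,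
      T (n + i)%N * U (n + j)%N - T n.-1 * U (n + 1 + i + j)%N = - (U i * T (j + 2)%N)
    & T (n + i)%N * T (n + j)%N - ('X ^+ 2 - 1) * U n.-1 * U (n - 1 + i + j)%N = T i * T j].
Proof.
move=> T U; rewrite {}/T {}/U; split.
- by rewrite (cheb_rec_shift_pred chebU_rec chebU_rec) // chebU0 mul1r chebUU_succ.
- by rewrite (cheb_rec_shift_pred chebT_rec chebT_rec) // chebT0 mul1r chebTT_succ.
- rewrite mulrC [(n + 1 + i + j)%N]addnAC.
  by rewrite (cheb_rec_shift_pred chebU_rec chebT_rec) // chebU0 mul1r chebUT_succ mulrC.
- by rewrite (cheb_rec_shift_pred chebT_rec chebU_rec) // chebT0 mul1r chebTU_succ addn2.
- by case: n hn => // r _; rewrite subn1 chebTT_pell_shift chebTT_pell_succ.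
Qed.
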